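(* Consider the algorithm OMM run on a matroid bandit $(M,P)$, and fix any episode $t\ge 1$. Let $\pi_t$ be a bijection given for the bases $A^*$ and $A^t$ (with the orderings described in the context) with the properties that $\{a^t_1,\dots,a^t_{k-1},a^*_{\pi_t(k)}\}\in\mathcal I$ for all $k$ and $\pi_t(k)=i$ whenever $a^t_k=a^*_i$. Define $\mathbb 1_{e,k}(t)=\mathbf 1[\exists i: a^t_i=e,\ \pi_t(i)=k]$. Then, with $w\sim P$ independent of $A^t$, $$\mathbb E_{w}\big[f(A^*,w)-f(A^t,w)\big]\le\sum_{e\in\bar A^*}\sum_{k=1}^{K_e}\Delta_{e,k}\,\mathbb 1_{e,k}(t).$$ Moreover, whenever $\mathbb 1_{e,k}(t)=1$ we have $U_t(e)\ge U_t(a^*_k)$; and $$\sum_{e\in\bar A^*}\sum_{k=1}^{K_e}\mathbb 1_{e,k}(t)\le K,\qquad \sum_{k=1}^{K_e}\mathbb 1_{e,k}(t)\le 1\ \text{ for every } e\in\bar A^*.$$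
   Context: A matroid $M=(E,\mathcal I)$ has ground set $E=\{1,\dots,L\}$ and rank $K$ (all bases, i.e. maximal independent sets, have cardinality $K$). For $X\in\mathcal I$ let $E(X)=\{e\in E\setminus X: X\cup\{e\}\in\mathcal I\}$. For $A\subseteq E$ and $w\in\mathbb R^L$ let $f(A,w)=\sum_{e\in A}w(e)$. A matroid bandit is a pair $(M,P)$ where $M$ is a known matroid and $P$ is an unknown probability distribution on $[0,1]^L$ (no independence between coordinates is assumed); $\bar w=\mathbb E_{w\sim P}[w]$. Weight vectors $w_0,w_1,w_2,\dots$ are drawn i.i.d. from $P$. $A^*=\{a^*_1,\dots,a^*_K\}$ is a fixed basis maximizing $f(A,\bar w)$ over $A\in\mathcal I$, indexed so that $\bar w(a^*_1)\ge\dots\ge\bar w(a^*_K)$; $\bar A^*=E\setminus A^*$ is the set of suboptimal items. For $e\in\bar A^*$ and $k\in\{1,\dots,K\}$, $\Delta_{e,k}=\bar w(a^*_k)-\bar w(e)$, and $K_e=|\{k:\Delta_{e,k}>0\}|$ (so $\Delta_{e,k}>0$ iff $k\le K_e$). Algorithm OMM (Optimistic Matroid Maximization): Initialization: observe $w_0$, set $\hat w_{e,1}=w_0(e)$ and $T_e(0)=1$ for all $e\in E$. For episodes $t=1,\dots,n$: compute $U_t(e)=\hat w_{e,T_e(t-1)}+c_{t-1,T_e(t-1)}$ for all $e$, where $c_{t,s}=\sqrt{2\log(t)/s}$ (with $c_{0,s}=0$); order the items as $e^t_1,\dots,e^t_L$ with $U_t(e^t_1)\ge\dots\ge U_t(e^t_L)$;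 start with $A^t=\emptyset$ and for $i=1,\dots,L$ add $e^t_i$ to $A^t$ if $e^t_i\in E(A^t)$. Then observe $w_t(e)$ for all $e\in A^t$ (semi-bandit feedback); set $T_e(t)=T_e(t-1)+\mathbf 1[e\in A^t]$, and for $e\in A^t$ update $\hat w_{e,T_e(t)}=\big(T_e(t-1)\hat w_{e,T_e(t-1)}+w_t(e)\big)/T_e(t)$; thus $\hat w_{e,s}$ is the average of the first $s$ observed weights of item $e$ and $T_e(t)$ is the number of observations of $e$ after episode $t$. The chosen basis is written $A^t=\{a^t_1,\dots,a^t_K\}$, where $a^t_k$ is the $k$-th item added to $A^t$ in episode $t$. *)

From HB Require Import structures.
From Stdlib Require Import Reals.
From mathcomp Require Import all_boot.
Set Implicit Arguments. Unset Strict Implicit. Unset Printing Implicit Defensive.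

HB.instance Definition _ := Monoid.isComLaw.Build R R0 Rplus (fun x y z => esym (Rplus_assoc x y z)) Rplus_comm Rplus_0_l.

Local Open Scope R_scope.

Definition Rleb (x y : R) : bool := if Rle_dec x y then true else false.

Section Matroid.
Variable L : nat.
Variable indep : {set 'I_L} -> bool.

Definition is_basis (B : {set 'I_L}) : Prop :=
  indep B /\ forall e, e \notin B -> ~~ indep (e |: B).

Definition matroid (K : nat) : Prop :=
  [/\ indep set0,
      (forall A B : {set 'I_L}, B \subset A -> indep A -> indep B),
      (forall A B : {set 'I_L}, indep A -> indep B -> (#|A| < #|B|)%N ->
          exists2 e, e \in B :\: A & indep (e |: A))
    & (forall B, is_basis B -> #|B| = K)].

Definition augments (X : {set 'I_L}) (e : 'I_L) : bool :=
  (e \notin X) && indep (e |: X).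

Fixpoint greedy_from (A : seq 'I_L) (s : seq 'I_L) : seq 'I_L :=
  match s with
  | [::] => A
  | e :: s' => greedy_from (if augments [set x in A] e then rcons A e else A) s'
  end.
Definition greedy (s : seq 'I_L) : seq 'I_L := greedy_from [::] s.

Definition fsum (A : {set 'I_L}) (w : 'I_L -> R) : R := \big[Rplus/0]_(e in A) w e.

Definition conf (t s : nat) : R :=
  if t == 0%N then 0 else sqrt (2 * ln (INR t) / INR s).

(* OMM run, driven by the realized weights ws t = w_t and the orderings
   ords t = (e^t_1, ..., e^t_L) chosen in episode t (ties broken arbitrarily).
   omm_state t = (T_e(t), sum of the T_e(t) observed weights of e). *)
Variable ws : nat -> 'I_L -> R.
Variable ords : nat -> seq 'I_L.

Definition omm_choice (t : nat) : seq 'I_L := greedy (ords t).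

Fixpoint omm_state (t : nat) : ('I_L -> nat) * ('I_L -> R) :=
  match t with
  | 0%N => (fun _ => 1%N, ws 0%N)
  | t'.+1 =>
      let (T, S) := omm_state t' in
      let A := omm_choice t'.+1 in
      (fun e => (T e + (e \in A))%N,
       fun e => S e + (if e \in A then ws t'.+1 e else 0))
  end.

Definition what (t : nat) (e : 'I_L) : R :=
  let (T, S) := omm_state t in S e / INR (T e).

Definition ucb (t : nat) (e : 'I_L) : R :=
  what t.-1 e + conf t.-1 ((omm_state t.-1).1 e).

Definition omm_valid_run : Prop :=
  forall t, (1 <= t)%N ->
    perm_eq (ords t) (enum 'I_L) /\
    sorted (fun x y => Rleb (ucb t y) (ucb t x)) (ords t).

End Matroid.

Section Regret.
Variables (L K : nat) (wbar : 'I_L -> R) (astar : 'I_K -> 'I_L) (at_ : 'I_K -> 'I_L)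
          (pi : 'I_K -> 'I_K).

Definition Astar : {set 'I_L} := [set astar k | k : 'I_K].

(* Delta_{e,k} (k is 0-based: k : 'I_K stands for k+1) *)
Definition gapd (e : 'I_L) (k : 'I_K) : R := wbar (astar k) - wbar e.

Definition Ke (e : 'I_L) : nat := #|[set k : 'I_K | Rleb (gapd e k) 0 == false]|.

Definition indic (e : 'I_L) (k : 'I_K) : nat :=
  if [exists i : 'I_K, (at_ i == e) && (pi i == k)] then 1%N else 0%N.
End Regret.

From HB Require Import structures.
From Stdlib Require Import Reals Lra.
From mathcomp Require Import all_boot.
(* The regret of episode t is the sum over k of wbar (a*_(pi k)) - wbar (a^t_k).
   A term with a^t_k in A* vanishes, because pi k then indexes that same item;
   any other term is the gap Delta_(e, pi k) of e = a^t_k, which is nonpositive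
   unless pi k < K_e since wbar decreases along A*.  The UCB comparison is an
   exchange property of the greedy scan: a*_(pi k) can be added to
   {a^t_1, ..., a^t_(k-1)}, so had OMM ranked it strictly above a^t_k, the scan
   would have picked it among the first k items, making it a^t_k itself.  The
   counting bounds hold because a chosen item e = a^t_i has 1_(e,k) = 1 exactly
   for k = pi i, and at most K items are chosen. *)

Set Implicit Arguments. Unset Strict Implicit. Unset Printing Implicit Defensive.
Local Open Scope R_scope.

Lemma RlebP (x y : R) : reflect (x <= y) (Rleb x y).
Proof. by rewrite /Rleb; case: Rle_dec => h; constructor. Qed.

Lemma Rle_big (I : finType) (P : pred I) (F G : I -> R) :
  (forall i, P i -> F i <= G i) ->
  \big[Rplus/0]_(i | P i) F i <= \big[Rplus/0]_(i | P i) G i.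
Proof.
move=> le_FG; apply: (big_ind2 (fun x y => x <= y)) => //; first exact: Rle_refl.
by move=> *; apply: Rplus_le_compat.
Qed.

Lemma big_Rminus (I : finType) (P : pred I) (F G : I -> R) :
  \big[Rplus/0]_(i | P i) (F i - G i) =
  \big[Rplus/0]_(i | P i) F i - \big[Rplus/0]_(i | P i) G i.
Proof. by elim/big_rec3: _ => [|i a b c _ ->]; lra. Qed.

Lemma fsum_imset L K (f : 'I_K -> 'I_L) (w : 'I_L -> R) :
  injective f -> fsum [set f k | k : 'I_K] w = \big[Rplus/0]_k w (f k).
Proof. by move=> f_inj; rewrite /fsum big_imset //= => x y _ _ /f_inj. Qed.

Section Greedy.
Variables (L : nat) (indep : {set 'I_L} -> bool).
Hypothesis indep_sub : forall A B : {set 'I_L}, B \subset A -> indep A -> indep B.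

Lemma greedy_from_cat A s1 s2 :
  greedy_from indep A (s1 ++ s2) = greedy_from indep (greedy_from indep A s1) s2.
Proof. by elim: s1 A => //= x s IH A. Qed.

Lemma greedy_from_prefix A s : exists r, greedy_from indep A s = A ++ r.
Proof.
elim: s A => [|x s IH] A /=; first by exists [::]; rewrite cats0.
case: ifP => _; last exact: IH.
by have [r ->] := IH (rcons A x); exists (x :: r); rewrite cat_rcons.
Qed.

Lemma mem_greedy_from A s x : x \in greedy_from indep A s -> x \in A ++ s.
Proof.
elim: s A => [|y s IH] A /=; first by rewrite cats0.
move/IH; rewrite !mem_cat in_cons; case/orP => [|->]; last by rewrite !orbT.
case: ifP => _; last by move->.
by rewrite mem_rcons in_cons => /orP[->|->]; rewrite ?orbT.
Qed.

Lemma greedy_from_uniq A s : uniq A -> uniq (greedy_from indep A s).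
Proof.
elim: s A => //= x s IH A uA; apply: IH; case: ifP => // /andP[xA _].
by rewrite rcons_uniq uA andbT; move: xA; rewrite inE.
Qed.

(* Exchange property of the greedy scan: an item [a] compatible with the first
   [i] chosen items is itself chosen among the first [i+1], unless the [i]-th
   chosen item was scanned before [a]. *)
Lemma greedy_exchange s1 s2 a i :
  let c := greedy indep (s1 ++ a :: s2) in
  (i < size c)%N -> indep (a |: [set x in take i c]) ->
  a \in take i.+1 c \/ nth a c i \in s1.
Proof.
rewrite /= /greedy greedy_from_cat; set B := greedy_from indep [::] s1.
have [rest cE] := greedy_from_prefix B (a :: s2); rewrite cE => lt_i_c ind_a.
have [lt_iB | le_Bi] := ltnP i (size B).
  by right; rewrite nth_cat lt_iB; exact: mem_greedy_from (mem_nth a lt_iB).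
left; have B_take x : x \in B -> x \in take i (B ++ rest).
  by rewrite take_cat ltnNge le_Bi mem_cat => ->.
have aB_indep : indep (a |: [set x in B]).
  apply: indep_sub ind_a; apply/subsetP => x; rewrite !inE.
  by case/orP=> [->//|/B_take ->]; rewrite orbT.
case: (boolP (a \in B)) => [/B_take a_i|aB].
  by rewrite in_take ?(mem_take a_i) //; exact: ltnW (index_ltn a_i).
move: cE; rewrite /= /augments inE aB aB_indep /=.
have [r ->] := greedy_from_prefix (rcons B a) s2; rewrite cat_rcons => /eqP.
rewrite eqseq_cat // => /andP[_ /eqP <-].
by rewrite take_cat ltnNge leqW // subSn //= mem_cat mem_head orbT.
Qed.

End Greedy.

Lemma mem_take_enum n K (j : 'I_K) : (j \in take n (enum 'I_K)) = (j < n)%N.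
Proof.
rewrite -(mem_map val_inj) map_take val_enum_ord take_iota mem_iota /=.
by rewrite add0n leq_min ltn_ord andbT.
Qed.

Lemma mem_take_map_enum (T : eqType) K (f : 'I_K -> T) n x :
  reflect (exists2 j : 'I_K, (j < n)%N & x = f j) (x \in take n [seq f k | k <- enum 'I_K]).
Proof.
rewrite -map_take; apply: (iffP mapP) => -[j]; rewrite ?mem_take_enum => j_lt ->;
  by exists j; rewrite ?mem_take_enum.
Qed.

Lemma nth_map_enum (T : Type) K (f : 'I_K -> T) x0 (i : 'I_K) :
  nth x0 [seq f k | k <- enum 'I_K] i = f i.
Proof.
rewrite -[in RHS](nth_ord_enum i i) (set_nth_default (f i)) ?size_map -?enumT ?size_enum_ord //.
by apply: nth_map; rewrite size_enum_ord.
Qed.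

Section OMMChoice.
Variables (L : nat) (indep : {set 'I_L} -> bool) (ws : nat -> 'I_L -> R) (ords : nat -> seq 'I_L).
Hypothesis indep_sub : forall A B : {set 'I_L}, B \subset A -> indep A -> indep B.
Hypothesis valid_run : omm_valid_run indep ws ords.

(* OMM scans the items by decreasing [ucb], so "scanned before [a]" in
   [greedy_exchange] means "with [ucb] at least that of [a]". *)
Lemma omm_choice_exchange t a i :
  (1 <= t)%N -> let c := omm_choice indep ords t in
  (i < size c)%N -> indep (a |: [set x in take i c]) ->
  a \in take i.+1 c \/ ucb indep ws ords t a <= ucb indep ws ords t (nth a c i).
Proof.
move=> t_ge1; have [perm_s sorted_s] := valid_run t_ge1.
have a_s : a \in ords t by rewrite (perm_mem perm_s) mem_enum.
rewrite /omm_choice; move: sorted_s; case/splitPr: a_s => s1 s2 sorted_s lt_i ind_a.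
have [a_chosen|before_a] := greedy_exchange indep_sub lt_i ind_a; [by left | right].
move: sorted_s; rewrite sorted_pairwise; last first.
  by move=> y x z /RlebP le_yx /RlebP le_zy; apply/RlebP; lra.
rewrite pairwise_cat => /andP[/allrelP ucb_s1 _].
by apply/RlebP; apply: ucb_s1 before_a (mem_head _ _).
Qed.

End OMMChoice.

Section UcbSwap.
Variables (L K : nat) (indep : {set 'I_L} -> bool) (ws : nat -> 'I_L -> R).
Variables (ords : nat -> seq 'I_L) (t : nat).
Variables (astar at_ : 'I_K -> 'I_L) (pi : 'I_K -> 'I_K).
Hypothesis indep_sub : forall A B : {set 'I_L}, B \subset A -> indep A -> indep B.
Hypothesis valid_run : omm_valid_run indep ws ords.
Hypothesis t_ge1 : (1 <= t)%N.
Hypothesis choice_at : omm_choice indep ords t = [seq at_ k | k <- enum 'I_K].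
Hypothesis pi_inj : injective pi.
Hypothesis indep_prefix_pi : forall k : 'I_K,
  indep ([set at_ i | i in [pred i : 'I_K | (i < k)%N]] :|: [set astar (pi k)]).
Hypothesis pi_fix : forall (k i : 'I_K), at_ k = astar i -> pi k = i.

Lemma ucb_astar_pi_le (i : 'I_K) :
  ucb indep ws ords t (astar (pi i)) <= ucb indep ws ords t (at_ i).
Proof.
set a := astar (pi i); set c := omm_choice indep ords t.
have lt_i : (i < size c)%N by rewrite /c choice_at size_map size_enum_ord.
have ind_a : indep (a |: [set x in take i c]).
  suff -> : [set x in take i c] = [set at_ j | j in [pred j : 'I_K | (j < i)%N]].
    by rewrite setUC; apply: indep_prefix_pi.
  by apply/setP => x; rewrite inE /c choice_at; apply/mem_take_map_enum/imsetP.
have [a_chosen | ] := omm_choice_exchange indep_sub valid_run t_ge1 lt_i ind_a.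
  rewrite /c choice_at in a_chosen; have [j _ a_j] := mem_take_map_enum _ _ _ a_chosen.
  have /pi_inj j_i : pi j = pi i by apply: pi_fix; rewrite -a_j.
  by rewrite a_j j_i; apply: Rle_refl.
by rewrite /c choice_at nth_map_enum.
Qed.

End UcbSwap.

Lemma sum_eq1_le1 (I : finType) (x : I) (P : pred I) :
  (\sum_(k | P k) (x == k : nat) <= 1)%N.
Proof.
rewrite big_mkcond (bigD1 x) //= big1 => [|k /negbTE]; last first.
  by rewrite eq_sym => ->; case: (P k).
by rewrite eqxx addn0; case: (P x).
Qed.

Lemma sum_mem_le_card (I : finType) (A C : {pred I}) :
  (\sum_(e in A) (e \in C : nat) <= #|C|)%N.
Proof.
rewrite -sum1_card big_mkcond [X in (_ <= X)%N]big_mkcond /=.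
by apply: leq_sum => e _; case: (e \in A); case: (e \in C).
Qed.

Section Indicator.
Variables (L K : nat) (at_ : 'I_K -> 'I_L) (pi : 'I_K -> 'I_K).
Hypothesis at_inj : injective at_.

Lemma indic_at i k : indic at_ pi (at_ i) k = (pi i == k).
Proof.
rewrite /indic; case: existsP => [[j /andP[/eqP/at_inj -> /eqP ->]] | no_j].
  by rewrite eqxx.
by case: eqP => // pik; case: no_j; exists i; rewrite pik !eqxx.
Qed.

Lemma indic_out e k : e \notin codom at_ -> indic at_ pi e k = 0%N.
Proof.
move=> e_out; rewrite /indic; case: existsP => // -[i /andP[/eqP e_i _]].
by move: e_out; rewrite -e_i codom_f.
Qed.

Lemma sum_indic_le_codom e (P : pred 'I_K) :
  (\sum_(k | P k) indic at_ pi e k <= (e \in codom at_))%N.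
Proof.
case: (boolP (e \in codom at_)) => [/codomP[i ->] | e_out].
  by rewrite (eq_bigr _ (fun k _ => indic_at i k)) sum_eq1_le1.
by rewrite big1 // => k _; apply: indic_out.
Qed.

Lemma sum_sum_indic_le (A : {pred 'I_L}) (P : 'I_L -> pred 'I_K) :
  (\sum_(e in A) \sum_(k | P e k) indic at_ pi e k <= K)%N.
Proof.
apply: (@leq_trans (\sum_(e in A) (e \in codom at_ : nat))).
  by apply: leq_sum => e _; apply: sum_indic_le_codom.
by rewrite -{2}(card_ord K) -(card_codom at_inj) sum_mem_le_card.
Qed.

End Indicator.

Section Regret.
Variables (L K : nat) (wbar : 'I_L -> R) (astar at_ : 'I_K -> 'I_L) (pi : 'I_K -> 'I_K).
Hypothesis wbar_astar_antitone :
  forall i j : 'I_K, (i <= j)%N -> wbar (astar j) <= wbar (astar i).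

Lemma gapd_le0 e (k : 'I_K) : ~~ (k < Ke wbar astar e)%N -> gapd wbar astar e k <= 0.
Proof.
move=> k_ge; apply: Rnot_lt_le => gap_pos; move/negP: k_ge; apply.
have k_lt : (k.+1 <= K)%N := ltn_ord k.
have w_inj : injective (widen_ord k_lt) by move=> x y /(congr1 val) /= /val_inj.
rewrite /Ke -[k.+1]card_ord -(card_imset _ w_inj); apply: subset_leq_card.
apply/subsetP => _ /imsetP[j _ ->]; rewrite inE; apply/eqP/negbTE/RlebP.
have j_le : (j <= k)%N by rewrite -ltnS.
have := @wbar_astar_antitone (widen_ord k_lt j) k j_le.
by rewrite /gapd /= in gap_pos *; lra.
Qed.

Hypothesis at_inj : injective at_.

Lemma gapd_pi_le_sum_indic i :
  gapd wbar astar (at_ i) (pi i) <=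
  \big[Rplus/0]_(k : 'I_K | (k < Ke wbar astar (at_ i))%N)
     (gapd wbar astar (at_ i) k * INR (indic at_ pi (at_ i) k)).
Proof.
under eq_bigr => k _ do rewrite indic_at //.
have [pi_lt | pi_ge] := boolP (pi i < Ke wbar astar (at_ i))%N.
  rewrite (bigD1 (pi i)) //= eqxx big1 => [|k /andP[_ /negbTE]]; first by simpl; lra.
  by rewrite eq_sym => -> /=; lra.
rewrite big1 => [|k k_lt]; first exact: gapd_le0.
by case: eqP => [pi_k | _] /=; [move: pi_ge; rewrite pi_k k_lt | lra].
Qed.

Hypotheses (astar_inj : injective astar) (pi_inj : injective pi).
Hypothesis pi_fix : forall (k i : 'I_K), at_ k = astar i -> pi k = i.

Lemma regret_le_sum_gapd_indic :
  fsum (Astar astar) wbar - fsum [set at_ k | k : 'I_K] wbar <=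
  \big[Rplus/0]_(e in ~: Astar astar)
     \big[Rplus/0]_(k : 'I_K | (k < Ke wbar astar e)%N)
        (gapd wbar astar e k * INR (indic at_ pi e k)).
Proof.
rewrite !fsum_imset // (reindex_inj pi_inj) -big_Rminus /=.
rewrite (bigID (fun i => at_ i \in ~: Astar astar)) /= [X in _ + X]big1 ?Rplus_0_r; last first.
  by move=> i; rewrite inE negbK => /imsetP[j _ at_j]; rewrite (pi_fix at_j) at_j; lra.
rewrite (partition_big at_ (fun e => e \in ~: Astar astar)) //=.
apply: Rle_big => e e_in; case: (boolP (e \in codom at_)) => [/codomP[i e_i] | e_out].
  rewrite e_i in e_in *; rewrite (bigD1 i) /= ?eqxx ?e_in //.
  rewrite big1 ?Rplus_0_r; first exact: gapd_pi_le_sum_indic.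
  by move=> j /andP[/andP[_ /eqP/at_inj ->]]; rewrite eqxx.
rewrite !big1 => [|k _|j /andP[_ /eqP e_j]]; first lra.
- by rewrite indic_out //= Rmult_0_r.
- by move: e_out; rewrite -e_j codom_f.
Qed.

End Regret.

Theorem theorem1
  (L K : nat) (indep : {set 'I_L} -> bool) (hM : matroid indep K)
  (wbar : 'I_L -> R) (hwbar : forall e, 0 <= wbar e <= 1)
  (astar : 'I_K -> 'I_L) (hinj : injective astar)
  (hbasis : is_basis indep (Astar astar))
  (hopt : forall A, indep A -> fsum A wbar <= fsum (Astar astar) wbar)
  (hsort : forall i j : 'I_K, (i <= j)%N -> wbar (astar j) <= wbar (astar i))
  (ws : nat -> 'I_L -> R) (hws : forall s e, 0 <= ws s e <= 1)
  (ords : nat -> seq 'I_L) (hrun : omm_valid_run indep ws ords)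
  (t : nat) (ht : (1 <= t)%N)
  (at_ : 'I_K -> 'I_L)
  (hat : omm_choice indep ords t = [seq at_ k | k <- enum 'I_K])
  (pi : 'I_K -> 'I_K) (hpi : bijective pi)
  (hpi1 : forall k : 'I_K,
      indep ([set at_ i | i in [pred i : 'I_K | (i < k)%N]] :|: [set astar (pi k)]))
  (hpi2 : forall (k i : 'I_K), at_ k = astar i -> pi k = i) :
  let At := [set at_ k | k : 'I_K] in
  let barA := ~: Astar astar in
  [/\ fsum (Astar astar) wbar - fsum At wbar <=
        \big[Rplus/0]_(e in barA)
           \big[Rplus/0]_(k : 'I_K | (k < Ke wbar astar e)%N)
              (gapd wbar astar e k * INR (indic at_ pi e k)),
      (forall (e : 'I_L) (k : 'I_K), indic at_ pi e k = 1%N ->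
          ucb indep ws ords t (astar k) <= ucb indep ws ords t e),
      (\sum_(e in barA) \sum_(k : 'I_K | (k < Ke wbar astar e)%N) indic at_ pi e k <= K)%N
    & (forall e, e \in barA ->
          (\sum_(k : 'I_K | (k < Ke wbar astar e)%N) indic at_ pi e k <= 1)%N)].
Proof.
move=> At barA.
have [_ indep_sub _ _] := hM.
have pi_inj : injective pi := bij_inj hpi.
have at_inj : injective at_.
  apply/injectiveP; have := greedy_from_uniq indep (ords t) (isT : uniq [::]).
  by rewrite -[greedy_from _ _ _]/(omm_choice indep ords t) hat.
split.
- exact: regret_le_sum_gapd_indic.
- move=> e k; rewrite /indic; case: existsP => // -[i /andP[/eqP <- /eqP <-]] _.
  exact: (ucb_astar_pi_le indep_sub hrun ht hat pi_inj hpi1 hpi2).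
- exact: sum_sum_indic_le.
- by move=> e _; apply: leq_trans (sum_indic_le_codom _ _ _ _) (leq_b1 _).
Qed.
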